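(* There are first-order formulas $\varphi_Q^{\mathrm{bit}}(x,u)$ and $\varphi_R^{\mathrm{bit}}(x,u)$ over binary relation symbols $<,\lhd$ and unary relation symbols $C,Q$ such that for every $n\in\mathbb{N}$ and all $a,b\in[n]$, in the structure $([n],<^n,\lhd^n,C^n,Q^n)$: $\varphi_Q^{\mathrm{bit}}(a,b)$ holds iff the $r(b)$-th bit of the binary representation of $q(a)$ is 1, and $\varphi_R^{\mathrm{bit}}(a,b)$ holds iff the $r(b)$-th bit of the binary representation of $r(a)$ is 1.
   Context: $[n]=\{0,1,\dots,n\}$; $<$ is the usual order on $\mathbb{N}$ and $P^n=P\cap[n]^k$ for a $k$-ary relation $P$ on $\mathbb{N}$. Bits are numbered from 0 at the least significant position. Let $q_i=\frac{i(i+1)}{2}$. For $x\in\mathbb{N}$ let $c(x)=\max\{i: q_i\le x\}$, $q(x)=q_{c(x)}$, $r(x)=x-q(x)$. The linear order $\lhd$: $x\lhd y$ iff $r(x)<r(y)$, or $r(x)=r(y)$ and $c(x)<c(y)$. $C=\{x: 2\nmid\lfloor (c(x)+1)/2^{r(x)}\rfloor\}$, $Q=\{x: 2\nmid\lfloor q_{c(x)+1}/2^{r(x)}\rfloor\}$. *)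

From mathcomp Require Import all_boot.
Set Implicit Arguments. Unset Strict Implicit. Unset Printing Implicit Defensive.

Definition tri (i : nat) : nat := (i * i.+1) %/ 2.

(* largest k' <= k with tri k' <= x (tri 0 = 0 so always defined) *)
Fixpoint cAux (k x : nat) : nat :=
  if k is k'.+1 then (if tri k <= x then k else cAux k' x) else 0.

(* c(x) = max { i : q_i <= x };  since q_i >= i, the max is <= x *)
Definition cc (x : nat) : nat := cAux x x.
Definition qq (x : nat) : nat := tri (cc x).
Definition rr (x : nat) : nat := x - qq x.

Definition bit (m i : nat) : bool := odd (m %/ 2 ^ i).

Definition lhd (x y : nat) : bool :=
  (rr x < rr y) || ((rr x == rr y) && (cc x < cc y)).

Definition Cset (x : nat) : bool := odd ((cc x).+1 %/ 2 ^ rr x).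
Definition Qset (x : nat) : bool := odd (tri (cc x).+1 %/ 2 ^ rr x).

Inductive form : Type :=
| FEq  : nat -> nat -> form
| FLt  : nat -> nat -> form
| FLhd : nat -> nat -> form
| FC   : nat -> form
| FQ   : nat -> form
| FNot : form -> form
| FAnd : form -> form -> form
| FOr  : form -> form -> form
| FEx  : nat -> form -> form
| FAll : nat -> form -> form.

Definition upd (e : nat -> nat) (v m : nat) : nat -> nat :=
  fun j => if j == v then m else e j.

(* Satisfaction in the structure ([n], <^n, <|^n, C^n, Q^n), [n] = {0,...,n},
   under the assignment e (whose values are meant to lie in [n]). *)
Fixpoint sat (n : nat) (e : nat -> nat) (f : form) : Prop :=
  match f with
  | FEq i j => e i = e j
  | FLt i j => e i < e j
  | FLhd i j => lhd (e i) (e j)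
  | FC i => Cset (e i)
  | FQ i => Qset (e i)
  | FNot g => ~ sat n e g
  | FAnd g h => sat n e g /\ sat n e h
  | FOr g h => sat n e g \/ sat n e h
  | FEx v g => exists m, m <= n /\ sat n (upd e v m) g
  | FAll v g => forall m, m <= n -> sat n (upd e v m) g
  end.

Definition vx : nat := 0.
Definition vu : nat := 1.

(* Write x = q_c + r with r <= c, where c = c(x) and r = r(x), and view x as the
   cell in row c and column r of a triangle; < orders the cells row by row and
   <| column by column.  Row starts (r = 0) are the x with x <= 1 or x <| x - 1,
   since the predecessor of a row start ends the previous row.  From them one
   defines "same row", "same column", "next row" and "column = row + 1".  Bit
   r(b) of q(a) = q_{c(a)} is recorded by Q on the cell in row c(a) - 1 and
   column r(b); bit r(b) of r(a) is recorded by C on the cell in row r(a) - 1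
   and column r(b).  If that cell does not exist the bit is 0, because
   q_c < 2^c. *)
From Stdlib Require Import Morphisms_Prop.
From mathcomp Require Import all_boot zify.
Set Implicit Arguments. Unset Strict Implicit.

Lemma triS c : tri c.+1 = tri c + c.+1.
Proof.
rewrite /tri.
have -> : c.+1 * c.+2 = c * c.+1 + c.+1 * 2 by nia.
by rewrite addnC divnMDl // addnC.
Qed.

Lemma leq_tri a b : a <= b -> tri a <= tri b.
Proof.
move=> /subnKC <-; elim: (b - a) => [|d IH]; first by rewrite addn0.
rewrite addnS triS; lia.
Qed.

Lemma leq_tri_id c : c <= tri c.
Proof. by elim: c => [|c IH] //; rewrite triS; lia. Qed.

Lemma tri_lt_exp2 c : tri c < 2 ^ c.
Proof.
elim: c => [|c IH] //; rewrite triS expnS.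
have := ltn_expl c (ltnSn 1); lia.
Qed.

Lemma cAux_le k x : tri (cAux k x) <= x.
Proof. by elim: k => [|k IH] //=; case: ifP. Qed.

Lemma cAux_max k x i : i <= k -> tri i <= x -> i <= cAux k x.
Proof.
elim: k i => [|k IH] i /=; first by case: i.
case: ifP => // Hk; rewrite leq_eqVlt => /orP[/eqP -> | ]; first by rewrite Hk.
exact: IH.
Qed.

Lemma tri_cc_le x : tri (cc x) <= x.
Proof. exact: cAux_le. Qed.

Lemma cc_max x i : tri i <= x -> i <= cc x.
Proof. by move=> H; apply: cAux_max => //; apply: leq_trans (leq_tri_id i) H. Qed.

Lemma lt_tri_ccS x : x < tri (cc x).+1.
Proof. by rewrite ltnNge; apply/negP => /cc_max; rewrite ltnn. Qed.

Lemma tri_cc_rr x : tri (cc x) + rr x = x.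
Proof. by rewrite /rr /qq subnKC // tri_cc_le. Qed.

Lemma rr_le_cc x : rr x <= cc x.
Proof. have := lt_tri_ccS x; rewrite triS -{1}(tri_cc_rr x); lia. Qed.

Lemma cc_tri_add c r : r <= c -> cc (tri c + r) = c.
Proof.
move=> Hr; apply/eqP; rewrite eqn_leq cc_max ?leq_addr // andbT leqNgt.
apply/negP => /leq_tri; have := tri_cc_le (tri c + r); rewrite triS; lia.
Qed.

Lemma rr_tri_add c r : r <= c -> rr (tri c + r) = r.
Proof. by move=> Hr; rewrite /rr /qq cc_tri_add // addKn. Qed.

Lemma ltn_cc_rr x y :
  (x < y) = (cc x < cc y) || ((cc x == cc y) && (rr x < rr y)).
Proof.
rewrite -{1}(tri_cc_rr x) -{1}(tri_cc_rr y).
have := rr_le_cc x; have := rr_le_cc y.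
case: (ltngtP (cc x) (cc y)) => Hc /= Hy Hx.
- have := leq_tri Hc; rewrite triS; lia.
- have := leq_tri Hc; rewrite triS; lia.
- rewrite Hc; lia.
Qed.

Lemma cc_rr_inj x y : cc x = cc y -> rr x = rr y -> x = y.
Proof. by move=> Hc Hr; rewrite -(tri_cc_rr x) -(tri_cc_rr y) Hc Hr. Qed.

Lemma leq_cc x y : x <= y -> cc x <= cc y.
Proof. by move=> H; apply: cc_max; apply: leq_trans (tri_cc_le x) H. Qed.

Lemma rr_eq0_lhd_pred t : 1 < t -> (rr t == 0) = lhd t t.-1.
Proof.
move=> Ht; have Et := tri_cc_rr t; have Hr := rr_le_cc t.
rewrite /lhd; case Er: (rr t) Et Hr => [|r] Et Hr /=.
- case Ec: (cc t) Et => [|[|d]]; rewrite addn0 => Et; try by rewrite -Et in Ht.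
  have -> : t.-1 = tri d.+1 + d.+1 by rewrite -Et triS; lia.
  by rewrite rr_tri_add.
- have -> : t.-1 = tri (cc t) + r by lia.
  rewrite rr_tri_add ?cc_tri_add; lia.
Qed.

Ltac simpl_upd := rewrite /upd ?eqxx /=;
  repeat match goal with |- context [?a == ?b] =>
    rewrite (_ : (a == b) = false); last by apply/eqP; lia end;
  rewrite ?eqxx /=.

Lemma upd_le n e v m : (forall j, e j <= n) -> m <= n -> forall j, upd e v m j <= n.
Proof. by move=> He Hm j; rewrite /upd; case: eqP. Qed.

Ltac sat_rewrite L := rewrite L; try solve [by do ! apply: upd_le | lia].

Section Semantics.
Variable n : nat.

Lemma bounded_ex_iff (P Q : nat -> Prop) :
  (forall m, m <= n -> P m <-> Q m) ->
  (exists m, m <= n /\ P m) <-> (exists m, m <= n /\ Q m).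
Proof. by move=> PQ; split=> -[m [Hm /(PQ m Hm) H]]; exists m. Qed.

Lemma bounded_all_iff (P Q : nat -> Prop) :
  (forall m, m <= n -> P m <-> Q m) ->
  (forall m, m <= n -> P m) <-> (forall m, m <= n -> Q m).
Proof. by move=> PQ; split=> H m Hm; apply/(PQ m Hm)/H. Qed.

(* In each formula builder the last argument k is the first fresh variable:
   the free variables are below k and the quantifiers bind k, k+1, ... *)
Definition FRowStart i k :=
  FOr (FNot (FEx k (FEx k.+1 (FAnd (FLt k k.+1) (FLt k.+1 i)))))
      (FEx k (FAnd (FLt k i) (FAnd (FLhd i k)
         (FNot (FEx k.+1 (FAnd (FLt k k.+1) (FLt k.+1 i))))))).

Lemma sat_FRowStart e i k : (forall j, e j <= n) -> i < k ->
  sat n e (FRowStart i k) <-> rr (e i) = 0.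
Proof.
move=> He Hik; rewrite /FRowStart /=; simpl_upd.
have := He i; set t := e i => Htn.
have [Ht|Ht] := leqP t 1.
  split=> [_|_]; first by case: t Ht {Htn} => [|[|]].
  by left; case=> m [_ [m' [_ H]]]; lia.
have -> : rr t = 0 <-> lhd t t.-1.
  by rewrite -rr_eq0_lhd_pred //; split=> [->|/eqP].
split=> [[H|[m [_ [Hmt [Hl H]]]]] | Hl].
- by exfalso; apply: H; exists 0; split=> //; exists 1; split; lia.
- suff -> : t.-1 = m by [].
  apply/eqP; rewrite eqn_leq -ltnS prednK ?Hmt // ?andbT; last by lia.
  by rewrite leqNgt; apply/negP => Hm; apply: H; exists t.-1; split; lia.
- right; exists t.-1; split; first lia.
  by split; [lia | split=> // -[m [_ H]]; lia].
Qed.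
Opaque FRowStart.

Definition FRowLt i j k :=
  FEx k (FAnd (FRowStart k k.+1) (FAnd (FLt i k) (FNot (FLt j k)))).

Lemma sat_FRowLt e i j k : (forall j, e j <= n) -> i < k -> j < k ->
  sat n e (FRowLt i j k) <-> cc (e i) < cc (e j).
Proof.
move=> He Hik Hjk; rewrite /FRowLt /=.
transitivity (exists w, w <= n /\ rr w = 0 /\ e i < w /\ w <= e j).
  apply: bounded_ex_iff => w Hw; sat_rewrite sat_FRowStart.
  by simpl_upd; lia.
have Hy := He j; set x := e i; set y := e j in Hy *.
split=> [[w [_ [Hw0 [Hxw Hwy]]]] | Hc].
- by move: Hxw (leq_cc Hwy); rewrite ltn_cc_rr Hw0 ltn0 andbF orbF; apply: leq_trans.
- have Hyrow := tri_cc_le y.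
  have Hrow : cc (tri (cc y)) = cc y by rewrite -[tri _]addn0 cc_tri_add.
  exists (tri (cc y)); split; first lia.
  split; first by rewrite -[tri _]addn0 rr_tri_add.
  by rewrite ltn_cc_rr Hrow Hc.
Qed.
Opaque FRowLt.

Definition FSameRow i j k := FAnd (FNot (FRowLt i j k)) (FNot (FRowLt j i k)).

Lemma sat_FSameRow e i j k : (forall j, e j <= n) -> i < k -> j < k ->
  sat n e (FSameRow i j k) <-> cc (e i) = cc (e j).
Proof. by move=> He Hik Hjk; rewrite /FSameRow /= !sat_FRowLt //; lia. Qed.
Opaque FSameRow.

(* If y <| x with c(y) < c(x) but r(y) < r(x), the cell of row c(x) and column
   r(y) precedes x in its row and follows y in <|. *)
Lemma col_above_iff y x : x <= n ->
  (lhd y x /\ cc y < cc x /\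
   ~ (exists w, w <= n /\ cc w = cc x /\ w < x /\ lhd y w))
  <-> rr y = rr x /\ cc y < cc x.
Proof.
move=> Hx; have Hry := rr_le_cc y; split.
- case=> [Hl [Hc Hno]]; split=> //; move: Hl; rewrite /lhd.
  case/orP => [Hr|/andP [/eqP -> //]]; exfalso; apply: Hno.
  have Hcw : cc (tri (cc x) + rr y) = cc x by rewrite cc_tri_add //; lia.
  have Hrw : rr (tri (cc x) + rr y) = rr y by rewrite rr_tri_add //; lia.
  exists (tri (cc x) + rr y); split; first by have := tri_cc_rr x; lia.
  split=> //; split; first by rewrite ltn_cc_rr Hcw eqxx Hrw Hr orbT.
  by rewrite /lhd Hrw Hcw eqxx Hc orbT.
- case=> [Hr Hc]; split; first by rewrite /lhd Hr eqxx Hc orbT.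
  split=> // -[w [_ [Hcw [Hwx Hl]]]].
  move: Hwx Hl; rewrite ltn_cc_rr Hcw eqxx ltnn /lhd Hr; lia.
Qed.

Definition FColAbove i j k :=
  FAnd (FLhd i j) (FAnd (FRowLt i j k)
    (FNot (FEx k (FAnd (FSameRow k j k.+1) (FAnd (FLt k j) (FLhd i k)))))).

Lemma sat_FColAbove e i j k : (forall j, e j <= n) -> i < k -> j < k ->
  sat n e (FColAbove i j k) <-> rr (e i) = rr (e j) /\ cc (e i) < cc (e j).
Proof.
move=> He Hik Hjk; rewrite -col_above_iff // /FColAbove /= sat_FRowLt //.
do 2 apply: and_iff_compat_l; apply: not_iff_compat.
by apply: bounded_ex_iff => w Hw; sat_rewrite sat_FSameRow; simpl_upd.
Qed.
Opaque FColAbove.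

Definition FSameCol i j k := FOr (FEq i j) (FOr (FColAbove i j k) (FColAbove j i k)).

Lemma sat_FSameCol e i j k : (forall j, e j <= n) -> i < k -> j < k ->
  sat n e (FSameCol i j k) <-> rr (e i) = rr (e j).
Proof.
move=> He Hik Hjk; rewrite /FSameCol /= !sat_FColAbove //.
split=> [[->|[[]|[]]] // | Hr].
by case: (ltngtP (cc (e i)) (cc (e j))) => Hc;
  [right; left | right; right | left; apply: cc_rr_inj].
Qed.
Opaque FSameCol.

Lemma row_succ_iff y x : x <= n ->
  (cc y < cc x /\ ~ (exists m, m <= n /\ cc y < cc m /\ cc m < cc x))
  <-> (cc y).+1 = cc x.
Proof.
move=> Hx; split=> [[Hc Hno] | <-]; last by split=> // -[m [_ Hm]]; lia.
apply/eqP; rewrite eqn_leq Hc leqNgt; apply/negP => Hgap; apply: Hno.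
have Hrow : cc (tri (cc y).+1) = (cc y).+1 by rewrite -[tri _]addn0 cc_tri_add.
exists (tri (cc y).+1); rewrite Hrow; split; last lia.
by have := leq_tri (ltnW Hgap); have := tri_cc_le x; lia.
Qed.

Definition FRowSucc i j k :=
  FAnd (FRowLt i j k) (FNot (FEx k (FAnd (FRowLt i k k.+1) (FRowLt k j k.+1)))).

Lemma sat_FRowSucc e i j k : (forall j, e j <= n) -> i < k -> j < k ->
  sat n e (FRowSucc i j k) <-> (cc (e i)).+1 = cc (e j).
Proof.
move=> He Hik Hjk; rewrite -row_succ_iff // /FRowSucc /= sat_FRowLt //.
apply: and_iff_compat_l; apply: not_iff_compat; apply: bounded_ex_iff => m Hm.
by sat_rewrite sat_FRowLt; sat_rewrite sat_FRowLt; simpl_upd.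
Qed.
Opaque FRowSucc.

(* The columns 0..c(y) of row c(y) are exactly the columns 0..r(x)-1 of the
   cells preceding x in its row. *)
Lemma col_succ_row_iff y x : y <= n -> x <= n ->
  (cc y < cc x
   /\ (forall v, v <= n -> cc v = cc y ->
         exists w, w <= n /\ cc w = cc x /\ w < x /\ rr v = rr w)
   /\ (forall w, w <= n -> cc w = cc x /\ w < x ->
         exists v, v <= n /\ cc v = cc y /\ rr v = rr w))
  <-> (cc y).+1 = rr x.
Proof.
move=> Hy Hx; have Hry := rr_le_cc y; have Hrx := rr_le_cc x.
have Ex := tri_cc_rr x; have Hlx := tri_cc_le x.
split.
- case=> [Hc [Hcols Hcols']].
  have Hend : tri (cc y) + cc y <= n by have := leq_tri Hc; rewrite triS; lia.
  have [w [_ [Hcw [Hwx Hrw]]]] := Hcols _ Hend (cc_tri_add (leqnn _)).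
  move: Hwx; rewrite ltn_cc_rr Hcw eqxx ltnn /= -Hrw rr_tri_add // => Hlt.
  apply/eqP; rewrite eqn_leq Hlt leqNgt; apply/negP => Hgt.
  have Hcw' : cc (tri (cc x) + (cc y).+1) = cc x by rewrite cc_tri_add //; lia.
  have Hrw' : rr (tri (cc x) + (cc y).+1) = (cc y).+1 by rewrite rr_tri_add //; lia.
  have Hw'x : cc (tri (cc x) + (cc y).+1) = cc x /\ tri (cc x) + (cc y).+1 < x.
    by rewrite ltn_cc_rr Hcw' eqxx Hrw' Hgt orbT.
  have [|v [_ [Hcv Hrv]]] := Hcols' _ _ Hw'x; first lia.
  by have := rr_le_cc v; rewrite Hcv Hrv Hrw'; lia.
- move=> Hr; split; first lia; split.
  + move=> v Hv Hcv; have Hrv := rr_le_cc v.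
    have Hcw : cc (tri (cc x) + rr v) = cc x by rewrite cc_tri_add //; lia.
    have Hrw : rr (tri (cc x) + rr v) = rr v by rewrite rr_tri_add //; lia.
    exists (tri (cc x) + rr v); split; first lia.
    by rewrite ltn_cc_rr Hcw eqxx Hrw; lia.
  + move=> w Hw [Hcw]; rewrite ltn_cc_rr Hcw eqxx ltnn /= => Hwx.
    have Hcv : cc (tri (cc y) + rr w) = cc y by rewrite cc_tri_add //; lia.
    have Hrv : rr (tri (cc y) + rr w) = rr w by rewrite rr_tri_add //; lia.
    exists (tri (cc y) + rr w); split=> //.
    by have := leq_tri (_ : (cc y).+1 <= cc x); rewrite triS; lia.
Qed.

Lemma not_or_iff_imp (P P' B B' : Prop) (b : bool) :
  reflect P' b -> (P <-> P') -> (B <-> B') -> (~ P \/ B) <-> (P' -> B').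
Proof. by case=> HP' PP' BB'; tauto. Qed.

Definition FColRowSucc i j k :=
  FAnd (FRowLt i j k) (FAnd
    (FAll k (FOr (FNot (FSameRow k i k.+1))
       (FEx k.+1 (FAnd (FSameRow k.+1 j k.+2)
          (FAnd (FLt k.+1 j) (FSameCol k k.+1 k.+2))))))
    (FAll k (FOr (FNot (FAnd (FSameRow k j k.+1) (FLt k j)))
       (FEx k.+1 (FAnd (FSameRow k.+1 i k.+2) (FSameCol k.+1 k k.+2)))))).

Lemma sat_FColRowSucc e i j k : (forall j, e j <= n) -> i < k -> j < k ->
  sat n e (FColRowSucc i j k) <-> (cc (e i)).+1 = rr (e j).
Proof.
move=> He Hik Hjk; rewrite -col_succ_row_iff // /FColRowSucc /= sat_FRowLt //.
apply: and_iff_compat_l; apply: and_iff_morphism;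
  apply: bounded_all_iff => m Hm.
- apply: (not_or_iff_imp eqP); first by sat_rewrite sat_FSameRow; simpl_upd.
  apply: bounded_ex_iff => w Hw.
  by sat_rewrite sat_FSameRow; sat_rewrite sat_FSameCol; simpl_upd.
- apply: (not_or_iff_imp (andPP eqP idP)); first by sat_rewrite sat_FSameRow; simpl_upd.
  apply: bounded_ex_iff => v Hv.
  by sat_rewrite sat_FSameRow; sat_rewrite sat_FSameCol; simpl_upd.
Qed.
Opaque FColRowSucc.

Lemma bit_lt m i k : bit m i -> m < 2 ^ k -> i < k.
Proof.
move=> Hb Hm; rewrite ltnNge; apply/negP => Hk; move: Hb.
by rewrite /bit divn_small // (leq_trans Hm) // leq_pexp2l.
Qed.

Lemma exists_cell_bit_iff (f : nat -> nat) d r :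
  (forall c, f c < 2 ^ c) -> tri d <= n ->
  (exists m, m <= n /\ bit (f (cc m).+1) (rr m) /\ rr m = r /\ (cc m).+1 = d)
  <-> bit (f d) r.
Proof.
move=> Hf Hd; split=> [[m [_ [Hb [<- <-]]]] // | Hb].
case: d Hd Hb (bit_lt Hb (Hf d)) => [//|d] Hd Hb Hr.
exists (tri d + r); rewrite cc_tri_add ?rr_tri_add //.
by split=> //; move: Hd; rewrite triS; lia.
Qed.

Definition phi_bitQ := FEx 2 (FAnd (FQ 2) (FAnd (FSameCol 2 vu 3) (FRowSucc 2 vx 3))).
Definition phi_bitR := FEx 2 (FAnd (FC 2) (FAnd (FSameCol 2 vu 3) (FColRowSucc 2 vx 3))).

Lemma sat_phi_bitQ e : (forall j, e j <= n) ->
  sat n e phi_bitQ <-> exists m, m <= n /\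
    bit (tri (cc m).+1) (rr m) /\ rr m = rr (e vu) /\ (cc m).+1 = cc (e vx).
Proof.
move=> He; rewrite /phi_bitQ /vx /vu /=; apply: bounded_ex_iff => m Hm.
by sat_rewrite sat_FSameCol; sat_rewrite sat_FRowSucc; simpl_upd.
Qed.

Lemma sat_phi_bitR e : (forall j, e j <= n) ->
  sat n e phi_bitR <-> exists m, m <= n /\
    bit (cc m).+1 (rr m) /\ rr m = rr (e vu) /\ (cc m).+1 = rr (e vx).
Proof.
move=> He; rewrite /phi_bitR /vx /vu /=; apply: bounded_ex_iff => m Hm.
by sat_rewrite sat_FSameCol; sat_rewrite sat_FColRowSucc; simpl_upd.
Qed.

End Semantics.

Theorem lemma3p4 :
  exists phiQ phiR : form,
    forall (n a b : nat), a <= n -> b <= n ->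
    forall e : nat -> nat, (forall j, e j <= n) -> e vx = a -> e vu = b ->
      (sat n e phiQ <-> bit (qq a) (rr b)) /\
      (sat n e phiR <-> bit (rr a) (rr b)).
Proof.
exists phi_bitQ, phi_bitR => n a b Ha _ e He Ea Eb.
have Hrow : tri (cc a) <= n := leq_trans (tri_cc_le a) Ha.
rewrite sat_phi_bitQ // sat_phi_bitR // Ea Eb; split.
- exact: exists_cell_bit_iff tri_lt_exp2 Hrow.
- exact: exists_cell_bit_iff (fun c => ltn_expl c (ltnSn 1))
                              (leq_trans (leq_tri (rr_le_cc a)) Hrow).
Qed.
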